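(* Let $A$ be a principal ideal domain and let $a=(a_b)_{b\neq0}\in A^\omega$. Let $d$ be a nonzero element of $A$ such that $a_d\equiv0\bmod d$. Then there is $q\in A^\omega$ with $a=d\,q$.
   Context: For a principal ideal domain $A$, $A^\omega$ is the ring whose elements are represented by families $(a_d)_{d\in A\setminus\{0\}}$ of elements of $A$ such that $d\mid e\Rightarrow a_d\equiv a_e\bmod d$ for all nonzero $d,e$; two families $(a_d)$, $(b_d)$ represent the same element iff $a_d\equiv b_d\bmod d$ for all $d\ne0$; operations are componentwise. $A$ is embedded in $A^\omega$ via constant families. *)

From HB Require Import structures.
From mathcomp Require Import all_boot all_algebra.
Set Implicit Arguments. Unset Strict Implicit. Unset Printing Implicit Defensive.
Import GRing.Theory.
Local Open Scope ring_scope.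

Definition dvdr (R : comNzRingType) (d e : R) : Prop := exists c : R, e = c * d.

Definition congr_mod (R : comNzRingType) (d x y : R) : Prop := dvdr d (x - y).

Definition is_ideal (R : comNzRingType) (I : R -> Prop) : Prop :=
  [/\ I 0, (forall x y, I x -> I y -> I (x + y)) & (forall r x, I x -> I (r * x))].

Definition is_PID (R : idomainType) : Prop :=
  forall I : R -> Prop, is_ideal I ->
    exists g : R, forall x, I x <-> exists r : R, x = r * g.

(* Representatives of elements of A^omega: families (a_d)_{d <> 0}, encoded as
   functions R -> R (the value at 0 is irrelevant), with the coherence
   condition d | e -> a_d = a_e mod d for nonzero d, e. *)
Definition omega_family (R : idomainType) (a : R -> R) : Prop :=
  forall d e : R, d != 0 -> e != 0 -> dvdr d e -> congr_mod d (a d) (a e).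

Definition omega_eq (R : idomainType) (a b : R -> R) : Prop :=
  forall d : R, d != 0 -> congr_mod d (a d) (b d).

Definition omega_const (R : idomainType) (c : R) : R -> R := fun _ => c.
Definition omega_mul (R : idomainType) (a b : R -> R) : R -> R := fun d => a d * b d.

(* Since d | a_d and the family is coherent, d divides a_e for every nonzero
   multiple e of d; so q_e := a_(d e) / d is well defined.  Coherence of a
   along d e | d f, divided by d, is coherence of q along e | f, and coherence
   of a along e | d e gives a_e = d q_e mod e. *)

From mathcomp Require Import all_boot all_algebra.
From mathcomp Require Import ring.
From Stdlib Require Import ClassicalEpsilon.
Set Implicit Arguments. Unset Strict Implicit. Unset Printing Implicit Defensive.
Import GRing.Theory.
Local Open Scope ring_scope.

Section Divisibility.

Variable R : idomainType.
Implicit Types d e x : R.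

Lemma dvdr_mulr d e : dvdr d (e * d).
Proof. by exists e. Qed.

Lemma dvdr_mull d e : dvdr d (d * e).
Proof. by exists e; rewrite mulrC. Qed.

Lemma dvdr_mul2r d e x : d != 0 -> dvdr (e * d) (x * d) -> dvdr e x.
Proof. by move=> hd [c hc]; exists c; apply: (mulIf hd); rewrite hc mulrA. Qed.

(* An arbitrary value unless d divides x. *)
Definition dvdr_quot d x : R := epsilon (inhabits 0) (fun c => x = c * d).

Lemma dvdr_quotK d x : dvdr d x -> x = dvdr_quot d x * d.
Proof. exact: epsilon_spec. Qed.

End Divisibility.

Section OmegaDivision.

Variables (R : idomainType) (a : R -> R) (d : R).
Hypotheses (ha : omega_family a) (hd : d != 0) (had : dvdr d (a d)).

Lemma omega_family_dvdr_multiple e : e != 0 -> dvdr d e -> dvdr d (a e).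
Proof.
move=> he hde; have [k hk] := ha hd he hde; have [m hm] := had.
by exists (m - k); rewrite mulrBl -hk -hm; ring.
Qed.

Definition omega_div : R -> R := fun e => dvdr_quot d (a (d * e)).

Lemma omega_divK e : e != 0 -> a (d * e) = omega_div e * d.
Proof.
move=> he; apply: dvdr_quotK; apply: omega_family_dvdr_multiple.
- by rewrite mulf_neq0.
- exact: dvdr_mull.
Qed.

Lemma omega_family_div : omega_family omega_div.
Proof.
move=> e f he hf [t ht].
have hde : d * e != 0 by rewrite mulf_neq0.
have hdf : d * f != 0 by rewrite mulf_neq0.
have hdv : dvdr (d * e) (d * f) by exists t; rewrite ht; ring.
have [k hk] := ha hde hdf hdv.
apply: (@dvdr_mul2r _ d) => //; exists k.
by rewrite mulrBl -(omega_divK he) -(omega_divK hf) hk; ring.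
Qed.

Lemma omega_eq_mul_div : omega_eq a (omega_mul (omega_const d) omega_div).
Proof.
move=> e he.
have [k hk] := ha he (mulf_neq0 hd he) (dvdr_mulr e d).
by exists k; rewrite /omega_mul /omega_const -hk (omega_divK he); ring.
Qed.

End OmegaDivision.

Theorem mainTheorem9 (R : idomainType) (hPID : is_PID R)
  (a : R -> R) (ha : omega_family a) (d : R) (hd : d != 0)
  (had : congr_mod d (a d) 0) :
  exists q : R -> R, omega_family q /\ omega_eq a (omega_mul (omega_const d) q).
Proof.
have hdvd : dvdr d (a d) by move: had; rewrite /congr_mod subr0.
exists (omega_div a d); split.
- exact: omega_family_div ha hd hdvd.
- exact: omega_eq_mul_div ha hd hdvd.
Qed.
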